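(* In the Setting below, if $S$ is a sparse stretched ring then $S$ is a canonical stretched ring.
   Context: Setting: $(S,\mathfrak n)$ is a one-dimensional Noetherian local domain, not regular, with infinite residue field $k$ and quotient field $K$; its integral closure $\overline S$ in $K$ is a DVR and a finite $S$-module, with uniformizer $t$, and $S/\mathfrak n\to\overline S/t\overline S$ is an isomorphism. $\delta=\ell_S(\overline S/S)$, $\mathfrak C_I=I:_K\overline S$. An $\mathfrak n$-primary ideal $I$ is maximum sparse if $\ell_S(I/\mathfrak C_I)=\delta$. An Artinian local ring $(R,\mathfrak m)$ is stretched if $\ell_R(\mathfrak m^2/\mathfrak m^3)=1$. $S$ is a sparse stretched ring if there is a maximum sparse ideal $I\subseteq\mathfrak n^2$ with $S/I$ stretched; $S$ is a canonical stretched ring if there is an irreducible ideal $I\subseteq\mathfrak n^2$ (not an intersection of two strictly larger ideals) with $S/I$ a stretched Artinian local ring. *)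

(* The local domain S is modelled as a subring of its
   quotient field K (a predicate on K); ideals, S-submodules of K and
   lengths of subquotients of K are defined honestly below. *)
From mathcomp Require Import all_boot all_order all_algebra.
Set Implicit Arguments. Unset Strict Implicit. Unset Printing Implicit Defensive.
Import GRing.Theory.
Local Open Scope ring_scope.

Section Defs.
Variables (K : fieldType) (S : K -> Prop).

Definition subset_ (A B : K -> Prop) := forall x, A x -> B x.
Definition seteq (A B : K -> Prop) := forall x, A x <-> B x.
Definition ssubset (A B : K -> Prop) := subset_ A B /\ ~ subset_ B A.

Definition subring := S 0 /\ S 1 /\ (forall x y, S x -> S y -> S (x - y))
  /\ (forall x y, S x -> S y -> S (x * y)).

Definition submod (M : K -> Prop) := M 0 /\ (forall x y, M x -> M y -> M (x + y))
  /\ (forall s x, S s -> M x -> M (s * x)).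

Definition ideal (I : K -> Prop) := subset_ I S /\ submod I.

Definition spanS (l : seq K) (x : K) := exists cs : seq K, size cs = size l /\
  (forall i, (i < size cs)%N -> S cs`_i) /\ x = \sum_(i < size l) cs`_i * l`_i.

Definition idsum (I J : K -> Prop) (x : K) := exists a b, I a /\ J b /\ x = a + b.
Definition idmul (I J : K -> Prop) (x : K) := exists a b : seq K, size a = size b /\
  (forall i, (i < size a)%N -> I a`_i /\ J b`_i) /\ x = \sum_(i < size a) a`_i * b`_i.
Fixpoint idpow (I : K -> Prop) (k : nat) : K -> Prop :=
  if k is k'.+1 then idmul (idpow I k') I else S.

Definition prime_ideal (P : K -> Prop) := ideal P /\ ~ P 1 /\
  (forall a b, S a -> S b -> P (a * b) -> P a \/ P b).

Definition nmax (x : K) := S x /\ (x != 0 -> ~ S x^-1).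

Definition is_chain (N M : K -> Prop) (c : nat -> K -> Prop) (n : nat) :=
  seteq (c 0%N) N /\ seteq (c n) M /\ (forall i, (i <= n)%N -> submod (c i)) /\
  (forall i, (i < n)%N -> ssubset (c i) (c i.+1)).
Definition length_eq (N M : K -> Prop) (n : nat) :=
  (exists c, is_chain N M c n) /\ (forall c m, is_chain N M c m -> (m <= n)%N).

Definition Sbar (x : K) := exists p : {poly K}, p \is monic /\
  (forall i, S p`_i) /\ root p x.

Definition tSbar (t y : K) := exists z, Sbar z /\ y = t * z.

Definition setting (t : K) :=
  subring /\
  (forall x, exists a b, S a /\ S b /\ b != 0 /\ x = a / b) /\
  (* local: the non-units form an ideal *)
  ideal nmax /\
  (forall I, ideal I -> exists l : seq K, (forall i, (i < size l)%N -> I l`_i) /\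
       subset_ I (spanS l)) /\
  (* dimension one *)
  (exists x, nmax x /\ x != 0) /\
  (forall P, prime_ideal P -> (exists x, P x /\ x != 0) -> seteq P nmax) /\
  (* not regular: the maximal ideal is not principal *)
  ~ (exists g, S g /\ forall x, nmax x <-> exists s, S s /\ x = s * g) /\
  (* infinite residue field *)
  (forall l : seq K, (forall i, (i < size l)%N -> S l`_i) ->
     exists s, S s /\ forall i, (i < size l)%N -> ~ nmax (s - l`_i)) /\
  (* Sbar is a DVR with uniformizer t *)
  Sbar t /\ t != 0 /\ ~ Sbar t^-1 /\
  (forall x, x != 0 -> exists (u : K) (k : int), Sbar u /\ u != 0 /\ Sbar u^-1 /\
      x = u * t ^ k) /\
  (exists l : seq K, seteq Sbar (spanS l)) /\
  (* S/n -> Sbar/tSbar is an isomorphism *)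
  (forall x, Sbar x -> exists s, S s /\ tSbar t (x - s)) /\
  (forall s, S s -> (tSbar t s <-> nmax s)).

Definition conductor (I : K -> Prop) (x : K) := forall y, Sbar y -> I (x * y).

Definition n_primary (I : K -> Prop) := ideal I /\ ~ I 1 /\
  (forall a b, S a -> S b -> I (a * b) -> ~ I a -> exists k, I (b ^+ k)) /\
  (forall x, S x -> (nmax x <-> exists k, I (x ^+ k))).

Definition max_sparse (I : K -> Prop) := n_primary I /\
  exists d, length_eq S Sbar d /\ length_eq (conductor I) I d.

(* S/I is an Artinian local ring: I is a proper ideal and S/I has finite length *)
Definition artinian_local_quot (I : K -> Prop) := ideal I /\ ~ I 1 /\
  exists d, length_eq I S d.

(* S/I stretched: ell((m^2)/(m^3)) = 1 where m = n/I, i.e. ell_S((n^2+I)/(n^3+I)) = 1 *)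
Definition stretched_quot (I : K -> Prop) := artinian_local_quot I /\
  length_eq (idsum (idpow nmax 3%N) I) (idsum (idpow nmax 2%N) I) 1%N.

Definition irreducible_ideal (I : K -> Prop) := ideal I /\
  ~ (exists J1 J2, ideal J1 /\ ideal J2 /\ ssubset I J1 /\ ssubset I J2 /\
       seteq I (fun x => J1 x /\ J2 x)).

Definition sparse_stretched := exists I, max_sparse I /\
  subset_ I (idpow nmax 2%N) /\ stretched_quot I.

Definition canonical_stretched := exists I, irreducible_ideal I /\
  subset_ I (idpow nmax 2%N) /\ stretched_quot I.

End Defs.

From mathcomp Require Import all_boot all_order all_algebra.
From mathcomp Require Import ring zify boolp.
Set Implicit Arguments. Unset Strict Implicit. Unset Printing Implicit Defensive.
Import GRing.Theory.
Local Open Scope ring_scope.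

(* A maximum sparse ideal is irreducible, so a sparse stretched ring is a
   canonical stretched ring, witnessed by the same ideal I.

   Let v be the valuation of the DVR Sbar (uniformizer t); say that j is a
   value of a set P when some x in P has v(x) = j.  Since I is n-primary and
   Sbar is a finite S-module, some t^k Sbar lies in I; let c be the least such
   k.  Writing delta = l(Sbar/S):
   - a chain C_I < ... < I of length delta forces I to have at least delta
     values in [0, c), because each strict step adds a value below c;
   - the chain S <= S + t^(c-1) Sbar <= ... <= S + Sbar = Sbar shows that S
     has at most delta gaps (non-values) in [0, c);
   - if j < c is a value of I then c-1-j is a gap of S, by minimality of c.
   Counting turns the last map into a bijection: for j < c, j is a value of
   I or c-1-j is a value of S.  Hence every ideal J strictly above I has an
   element of value c-1, so J contains t^(c-1) Sbar; if I = J1 /\ J2 with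
   both J1, J2 strictly above I, then I contains t^(c-1) Sbar, contradicting
   the choice of c. *)

Section Subring.
Variables (K : fieldType) (S : K -> Prop).
Hypothesis HS : subring S.

Lemma subring0 : S 0. Proof. by case: HS. Qed.
Lemma subring1 : S 1. Proof. by case: HS => _ []. Qed.
Lemma subringB x y : S x -> S y -> S (x - y). Proof. by case: HS => _ [_ [SB _]]; exact: SB. Qed.
Lemma subringM x y : S x -> S y -> S (x * y). Proof. by case: HS => _ [_ [_ SM]]; exact: SM. Qed.
Lemma subringN x : S x -> S (- x).
Proof. by move=> Sx; rewrite -sub0r; apply: subringB => //; exact: subring0. Qed.
Lemma subringD x y : S x -> S y -> S (x + y).
Proof. by move=> Sx Sy; rewrite -[y]opprK; apply: subringB => //; exact: subringN. Qed.

Lemma subring_sum (I : Type) (r : seq I) (P : pred I) (F : I -> K) :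
  (forall i, P i -> S (F i)) -> S (\sum_(i <- r | P i) F i).
Proof. by move=> SF; apply: big_ind => //; [exact: subring0 | exact: subringD]. Qed.

Lemma subring_nat n : S n%:R.
Proof.
elim: n => [|n IHn]; first exact: subring0.
by rewrite -addn1 natrD; apply: subringD => //; exact: subring1.
Qed.

Lemma submod_subM (P : K -> Prop) x y s :
  submod S P -> P x -> P y -> S s -> P (x - s * y).
Proof.
move=> [_ [PD PM]] Px Py Ss; rewrite -mulNr.
by apply: PD => //; apply: PM => //; exact: subringN.
Qed.

Definition coefS (p : {poly K}) := forall i, S p`_i.

Lemma coefS0 : coefS 0. Proof. by move=> i; rewrite coef0; exact: subring0. Qed.
Lemma coefS1 : coefS 1. Proof. by move=> i; rewrite coef1; exact: subring_nat. Qed.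
Lemma coefSX : coefS 'X. Proof. by move=> i; rewrite coefX; exact: subring_nat. Qed.
Lemma coefSC c : S c -> coefS c%:P.
Proof. by move=> Sc i; rewrite coefC; case: eqP => _ //; exact: subring0. Qed.
Lemma coefSD p q : coefS p -> coefS q -> coefS (p + q).
Proof. by move=> Sp Sq i; rewrite coefD; exact: subringD. Qed.
Lemma coefSN p : coefS p -> coefS (- p).
Proof. by move=> Sp i; rewrite coefN; exact: subringN. Qed.
Lemma coefSM p q : coefS p -> coefS q -> coefS (p * q).
Proof. by move=> Sp Sq i; rewrite coefM; apply: subring_sum => j _; exact: subringM. Qed.
Lemma coefSMn p n : coefS p -> coefS (p *+ n).
Proof. by move=> Sp i; rewrite coefMn -mulr_natr; apply: subringM => //; exact: subring_nat. Qed.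

Lemma determinant_trick (I : finType) (g : I -> K) (A : I -> I -> K) z :
  (forall i j, S (A i j)) -> (exists i, g i != 0) ->
  (forall j, z * g j = \sum_i g i * A i j) -> Sbar S z.
Proof.
move=> SA [i0 gi0] zg.
pose M := \matrix_(k, l) A (enum_val k) (enum_val l) : 'M[K]_#|I|.
exists (char_poly M); split; first exact: char_poly_monic.
split.
  change (coefS (char_poly M)); rewrite /char_poly /char_poly_mx /determinant.
  apply: big_ind; [exact: coefS0 | exact: coefSD |] => s _.
  apply: coefSM => //.
    by case: (perm.odd_perm s); rewrite ?expr1 ?expr0; [apply: coefSN|]; exact: coefS1.
  apply: big_ind; [exact: coefS1 | exact: coefSM |] => i _.
  rewrite !mxE; apply: coefSD => //; first by apply: coefSMn => //; exact: coefSX.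
  by apply: coefSN => //; apply: coefSC.
have -> : root (char_poly M) z = (\det (z%:M - M) == 0).
  rewrite /root /char_poly -horner_evalE -det_map_mx; congr (determinant _ == 0).
  by apply/matrixP => i j; rewrite !mxE /= horner_evalE hornerD hornerN hornerMn hornerX hornerC.
apply/det0P; exists (\row_k g (enum_val k)).
  by apply/eqP => /matrixP/(_ 0 (enum_rank i0)); rewrite !mxE enum_rankK => /eqP; apply/negP.
apply/rowP => j; rewrite mulmxBr mul_mx_scalar !mxE zg; apply/eqP; rewrite subr_eq0.
rewrite (big_enum_val (A := I) (fun i => g i * A i (enum_val j))).
by apply/eqP/eq_bigr => k _; rewrite !mxE.
Qed.

Definition span (I : finType) (g : I -> K) (x : K) :=
  exists f : I -> K, (forall i, S (f i)) /\ x = \sum_i f i * g i.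

Section Span.
Variables (I : finType) (g : I -> K).

Lemma span_gen i : span g (g i).
Proof.
exists (fun j => (j == i)%:R); split=> [j|]; first exact: subring_nat.
rewrite (bigD1 i) //= eqxx mul1r big1 ?addr0 // => j /negPf ->; exact: mul0r.
Qed.

Lemma span_add x y : span g x -> span g y -> span g (x + y).
Proof.
move=> [f [Sf ->]] [h [Sh ->]]; exists (fun i => f i + h i); split.
  by move=> i; exact: subringD.
by rewrite -big_split; apply: eq_bigr => i _; rewrite mulrDl.
Qed.

Lemma span_scale s x : S s -> span g x -> span g (s * x).
Proof.
move=> Ss [f [Sf ->]]; exists (fun i => s * f i); split.
  by move=> i; exact: subringM.
by rewrite mulr_sumr; apply: eq_bigr => i _; rewrite mulrA.
Qed.

Lemma span_sum (J : Type) (r : seq J) (P : pred J) (F : J -> K) :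
  (forall j, P j -> span g (F j)) -> span g (\sum_(j <- r | P j) F j).
Proof.
move=> SF; apply: big_ind => //; last exact: span_add.
exists (fun _ => 0); split=> [_|]; first exact: subring0.
by rewrite big1 // => j _; rewrite mul0r.
Qed.

Lemma span_mulr z : (forall i, span g (z * g i)) -> forall x, span g x -> span g (z * x).
Proof.
move=> zg x [f [Sf ->]]; rewrite mulr_sumr; apply: span_sum => i _.
by rewrite mulrCA; exact: span_scale.
Qed.

Lemma span_integral z :
  (exists i, g i != 0) -> (forall x, span g x -> span g (z * x)) -> Sbar S z.
Proof.
move=> gnz zspan.
have /choice [A zA] : forall j, exists f : I -> K, (forall i, S (f i)) /\ z * g j = \sum_i f i * g i.
  by move=> j; apply: zspan; exact: span_gen.
apply: (determinant_trick (A := fun i j => A j i) _ gnz) => [i j|j].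
  exact: (zA j).1.
by rewrite (zA j).2; apply: eq_bigr => i _; rewrite mulrC.
Qed.

End Span.

Lemma integral_powers_span x : Sbar S x ->
  exists n, (0 < n)%N /\ forall k, span (fun i : 'I_n => x ^+ i) (x ^+ k).
Proof.
move=> [p [mp [Sp rp]]].
have sz : (1 < size p)%N.
  rewrite ltnNge; apply/negP => /size1_polyC Ep.
  move: mp rp; rewrite Ep monicE lead_coefC => /eqP ->.
  by rewrite /root hornerC oner_eq0.
have lc : lead_coef p = 1 by exact/monicP.
move: rp; rewrite /root horner_coef /lead_coef in lc *.
case Esz: (size p) sz lc => [|n] // sz lc /eqP.
rewrite big_ord_recr /= lc mul1r => Ep.
exists n; split; first by case: n sz {Ep lc Esz}.
pose g := fun i : 'I_n => x ^+ i.
have gn : span g (x ^+ n).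
  exists (fun i : 'I_n => - p`_i); split=> [i|]; first exact: subringN.
  have -> : x ^+ n = - \sum_(i < n) p`_(widen_ord (leqnSn n) i) * x ^+ (widen_ord (leqnSn n) i).
    by apply/eqP; rewrite -addr_eq0 addrC Ep.
  by rewrite -sumrN; apply: eq_bigr => i _; rewrite mulNr.
have gx : forall i : 'I_n, span g (x * g i).
  move=> i; rewrite /g -exprS; case: (ltnP i.+1 n) => h.
    exact: (span_gen g (Ordinal h)).
  by have -> : i.+1 = n by apply/eqP; rewrite eqn_leq h ltn_ord.
elim=> [|k IHk]; last by rewrite exprS; exact: span_mulr.
case: n {Esz lc} sz Ep @g gn gx => // n _ _ g _ _.
exact: (span_gen g ord0).
Qed.

Lemma Sbar_ring x y :
  Sbar S x -> Sbar S y -> [/\ Sbar S (x * y), Sbar S (x + y) & Sbar S (- x)].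
Proof.
move=> /integral_powers_span [n [n0 xn]] /integral_powers_span [m [m0 ym]].
pose g := fun ij : 'I_n * 'I_m => x ^+ ij.1 * y ^+ ij.2.
have gnz : exists ij, g ij != 0.
  by exists (Ordinal n0, Ordinal m0); rewrite /g /= mulr1 oner_eq0.
have gx : forall w, span g w -> span g (x * w).
  apply: span_mulr => -[i j]; rewrite /g /= mulrA -exprS.
  have [f [Sf ->]] := xn i.+1; rewrite mulr_suml; apply: span_sum => k _.
  by rewrite -mulrA; apply: span_scale => //; exact: (span_gen g (k, j)).
have gy : forall w, span g w -> span g (y * w).
  apply: span_mulr => -[i j]; rewrite /g /= mulrCA -exprS.
  have [f [Sf ->]] := ym j.+1; rewrite mulr_sumr; apply: span_sum => k _.
  by rewrite mulrCA; apply: span_scale => //; exact: (span_gen g (i, k)).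
split; apply: (span_integral gnz) => w gw.
- by rewrite -mulrA; apply: gx; exact: gy.
- by rewrite mulrDl; apply: span_add; [exact: gx | exact: gy].
- rewrite mulNr -mulN1r; apply: span_scale; last exact: gx.
  by apply: subringN => //; exact: subring1.
Qed.

Lemma Sbar_mul x y : Sbar S x -> Sbar S y -> Sbar S (x * y).
Proof. by move=> Sx Sy; case: (Sbar_ring Sx Sy). Qed.
Lemma Sbar_add x y : Sbar S x -> Sbar S y -> Sbar S (x + y).
Proof. by move=> Sx Sy; case: (Sbar_ring Sx Sy). Qed.
Lemma Sbar_opp x : Sbar S x -> Sbar S (- x).
Proof. by move=> Sx; case: (Sbar_ring Sx Sx). Qed.

Lemma Sbar_S s : S s -> Sbar S s.
Proof.
move=> Ss; exists ('X - s%:P); split; first exact: monicXsubC.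
split; last by rewrite root_XsubC.
apply: coefSD => //; first exact: coefSX.
by apply: coefSN => //; exact: coefSC.
Qed.

Lemma common_denominator (l : seq K) :
  (forall x, exists a b, S a /\ S b /\ b != 0 /\ x = a / b) ->
  exists b, [/\ S b, b != 0 & forall i, (i < size l)%N -> S (b * l`_i)].
Proof.
move=> frac; elim: l => [|x l [b [Sb b0 Sbl]]].
  by exists 1; split=> //; [exact: subring1 | exact: oner_neq0].
have [a [e [Sa [Se [e0 ->]]]]] := frac x.
exists (b * e); split; [exact: subringM | by rewrite mulf_neq0 |].
case=> [|i] /= il; last by rewrite mulrAC; apply: subringM => //; exact: Sbl.
have -> : b * e * (a / e) = b * a by field.
exact: subringM.
Qed.

End Subring.

Section Chains.
Variables (K : fieldType) (S : K -> Prop).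

Lemma chain_transport N M N' M' ch m :
  is_chain S N M ch m -> seteq N N' -> seteq M M' -> is_chain S N' M' ch m.
Proof.
move=> [ch0 [chm chs]] NN' MM'; split; [|split=> //].
  by move=> x; rewrite ch0 NN'.
by move=> x; rewrite chm MM'.
Qed.

Lemma chain_mono N M ch m i k :
  is_chain S N M ch m -> (i + k <= m)%N -> subset_ (ch i) (ch (i + k)%N).
Proof.
move=> [_ [_ [_ chlt]]]; elim: k => [|k IHk] ik x; first by rewrite addn0.
rewrite addnS in ik *; move=> /(IHk (ltnW ik)); exact: (chlt _ ik).1.
Qed.

Lemma increasing_chain (f : nat -> K -> Prop) :
  (forall i, submod S (f i)) -> (forall i, subset_ (f i) (f i.+1)) ->
  forall n, exists ch m, is_chain S (f 0%N) (f n) ch m /\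
    (\sum_(i < n) `[< ~ subset_ (f i.+1) (f i) >] <= m)%N.
Proof.
move=> fs fmono; elim=> [|n [ch [m [[ch0 [chm [chs chlt]]] msum]]]].
  by exists (fun _ => f 0%N), 0%N; rewrite big_ord0.
rewrite big_ord_recr /=; have [strict|eqn] := pselect (~ subset_ (f n.+1) (f n)).
  exists (fun i => if (i <= m)%N then ch i else f n.+1), m.+1.
  rewrite (asboolT strict) addn1 /=; split=> //; split=> //; split; first by rewrite ltnn.
  split=> [i _|i]; first by case: ifP => // im; exact: chs.
  rewrite ltnS => im; rewrite im; case: (leqP i.+1 m) => im1; first exact: chlt.
  have -> : i = m by apply/eqP; rewrite eqn_leq im -ltnS im1.
  by split=> [x /chm /fmono //|sub]; apply: strict => x /sub /chm.
exists ch, m; rewrite (asboolF eqn) addn0; split=> //; split=> //; split=> // x.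
by rewrite chm; split=> [/fmono //|]; apply: (contrapT eqn).
Qed.

End Chains.

Section Valuation.
Variables (K : fieldType) (S : K -> Prop) (t : K).
Hypotheses (HS : subring S) (Sbar_t : Sbar S t) (t_neq0 : t != 0)
  (t_nonunit : ~ Sbar S t^-1)
  (Sbar_factor : forall x, x != 0 -> exists (u : K) (k : int),
     Sbar S u /\ u != 0 /\ Sbar S u^-1 /\ x = u * t ^ k)
  (Sbar_residue : forall x, Sbar S x -> exists s, S s /\ tSbar S t (x - s)).

(* vge j x : x lies in t^j Sbar, i.e. v(x) >= j (for every j when x = 0). *)
Definition vge (j : nat) (x : K) := Sbar S (x / t ^+ j).
Definition vexact (j : nat) (x : K) := vge j x /\ ~ vge j.+1 x.
Definition value_of (P : K -> Prop) (j : nat) := exists x, P x /\ vexact j x.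

Lemma tn_neq0 j : t ^+ j != 0.
Proof. exact: expf_neq0. Qed.

Lemma Sbar_tn n : Sbar S (t ^+ n).
Proof.
elim: n => [|n IHn]; first by apply: Sbar_S => //; exact: subring1.
by rewrite exprS; exact: Sbar_mul.
Qed.

Lemma vge0 x : vge 0 x <-> Sbar S x.
Proof. by rewrite /vge expr0 divr1. Qed.

Lemma vge_0 j : vge j 0.
Proof. by rewrite /vge mul0r; apply: Sbar_S => //; exact: subring0. Qed.

Lemma vge_tn j : vge j (t ^+ j).
Proof. by rewrite /vge divff ?tn_neq0 //; apply: Sbar_S => //; exact: subring1. Qed.

Lemma vgeD j x y : vge j x -> vge j y -> vge j (x + y).
Proof. by move=> vx vy; rewrite /vge mulrDl; exact: Sbar_add. Qed.

Lemma vgeN j x : vge j x -> vge j (- x).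
Proof. by move=> vx; rewrite /vge mulNr; exact: Sbar_opp. Qed.

Lemma vgeB j x y : vge j x -> vge j y -> vge j (x - y).
Proof. by move=> vx vy; apply: vgeD => //; exact: vgeN. Qed.

Lemma vge_mulr j x y : vge j x -> Sbar S y -> vge j (x * y).
Proof. by move=> vx Sy; rewrite /vge mulrAC; exact: Sbar_mul. Qed.

Lemma vge_mull j x y : vge j x -> Sbar S y -> vge j (y * x).
Proof. by rewrite mulrC; exact: vge_mulr. Qed.

Lemma vgeM a b x y : vge a x -> vge b y -> vge (a + b) (x * y).
Proof. by move=> vx vy; rewrite /vge exprD invfM mulrACA; exact: Sbar_mul. Qed.

Lemma vge_le i j x : (i <= j)%N -> vge j x -> vge i x.
Proof.
move=> /subnK <-; rewrite addnC /vge; move: (j - i)%N => k vx.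
have -> : x / t ^+ i = x / t ^+ (i + k) * t ^+ k.
  by rewrite exprD; field; rewrite !tn_neq0.
by apply: Sbar_mul => //; exact: Sbar_tn.
Qed.

Lemma factor_nat x : x != 0 -> exists u, [/\ Sbar S u, u != 0, Sbar S u^-1 &
  (exists n, x = u * t ^+ n) \/ (exists n, x = u / t ^+ n.+1)].
Proof.
move=> x0; have [u [[n|n] [Su [u0 [Sui ->]]]]] := Sbar_factor x0.
  by exists u; split=> //; left; exists n.
by exists u; split=> //; right; exists n.
Qed.

Lemma Sbar_unit b : Sbar S b -> ~ vge 1 b -> b != 0 /\ Sbar S b^-1.
Proof.
move=> Sb nb1.
have b0 : b != 0 by apply: contra_notN nb1 => /eqP ->; exact: vge_0.
split=> //; have [u [Su u0 Sui [[[|n] Eb]|[n Eb]]]] := factor_nat b0.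
- by rewrite Eb expr0 mulr1.
- case: nb1; rewrite /vge.
  have -> : b / t ^+ 1 = u * t ^+ n by rewrite Eb exprS expr1; field.
  by apply: Sbar_mul => //; exact: Sbar_tn.
- case: t_nonunit.
  have -> : t^-1 = b * u^-1 * t ^+ n by rewrite Eb exprS; field; rewrite u0 ?tn_neq0 ?t_neq0.
  by apply: Sbar_mul => //; [exact: Sbar_mul | exact: Sbar_tn].
Qed.

Lemma vexact_unit j x : vexact j x -> x != 0 /\ Sbar S (t ^+ j / x).
Proof.
move=> [vx nvx]; have nb1 : ~ vge 1 (x / t ^+ j).
  by rewrite /vge expr1 -mulrA -invfM -exprSr.
have [b0 Sbi] := Sbar_unit vx nb1.
split; first by apply: contraNneq b0 => ->; rewrite mul0r.
by rewrite invfM invrK mulrC in Sbi.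
Qed.

Lemma vge_bounded x : x != 0 -> exists N, ~ vge N x.
Proof.
move=> x0; have [u [Su u0 Sui [[n Ex]|[n Ex]]]] := factor_nat x0.
  exists n.+1 => vx; case: t_nonunit.
  have -> : t^-1 = (x / t ^+ n.+1) * u^-1 by rewrite Ex exprS; field; rewrite u0 ?tn_neq0 ?t_neq0.
  exact: Sbar_mul.
exists 0%N => /vge0 Sx; case: t_nonunit.
have -> : t^-1 = x * u^-1 * t ^+ n by rewrite Ex exprS; field; rewrite u0 ?tn_neq0 ?t_neq0.
by apply: Sbar_mul => //; [exact: Sbar_mul | exact: Sbar_tn].
Qed.

Lemma value_exists x : Sbar S x -> x != 0 -> exists j, vexact j x.
Proof.
move=> Sx /vge_bounded [N]; elim: N => [/vge0 //|N IHN] nvx.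
by have [vx|/IHN //] := pselect (vge N x); exists N.
Qed.

Lemma vexact_tn j : vexact j (t ^+ j).
Proof.
split; first exact: vge_tn.
rewrite /vge; have -> // : t ^+ j / t ^+ j.+1 = t^-1.
by rewrite exprS; field; rewrite ?tn_neq0 ?t_neq0.
Qed.

Lemma vexact_addr j x y : vexact j x -> vge j.+1 y -> vexact j (x + y).
Proof.
move=> [vx nvx] vy; split; first by apply: vgeD => //; exact: vge_le vy.
by move=> vxy; apply: nvx; rewrite -(addrK y x); exact: vgeB.
Qed.

Lemma vexactM a b x y : vexact a x -> vexact b y -> vexact (a + b) (x * y).
Proof.
move=> ex ey; split; first exact: vgeM ex.1 ey.1.
have [x0 Sxi] := vexact_unit ex; have [y0 Syi] := vexact_unit ey.
move=> vxy; case: t_nonunit.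
have -> : t^-1 = (x * y / t ^+ (a + b).+1) * (t ^+ a / x) * (t ^+ b / y).
  by rewrite exprS exprD; field; rewrite x0 y0 ?tn_neq0 ?t_neq0.
by apply: Sbar_mul => //; exact: Sbar_mul.
Qed.

(* The residue field of Sbar is that of S: an element of value >= j can be
   corrected by an S-multiple of any element of value j to raise its value. *)
Lemma residue_approx j x p : vge j x -> vexact j p ->
  exists s, S s /\ vge j.+1 (x - s * p).
Proof.
move=> vx ep; have [p0 Spi] := vexact_unit ep.
have [s [Ss [z [Sz Ez]]]] := Sbar_residue (Sbar_mul HS vx Spi).
exists s; split=> //; rewrite /vge.
have -> : (x - s * p) / t ^+ j.+1 = p / t ^+ j * z.
  have -> : s = x / t ^+ j * (t ^+ j / p) - t * z by rewrite -Ez opprB addrC subrK.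
  by rewrite exprS; field; rewrite p0 ?tn_neq0 ?t_neq0.
by apply: Sbar_mul => //; exact: ep.1.
Qed.

Lemma vge_closure (P : K -> Prop) j : submod S P ->
  (forall x, vge j.+1 x -> P x) -> value_of P j -> forall x, vge j x -> P x.
Proof.
move=> sP Pj1 [p [Pp ep]] x vx.
have [vx1|nvx1] := pselect (vge j.+1 x); first exact: Pj1.
have [s [Ss vxs]] := residue_approx vx ep.
have -> : x = (x - s * p) - (- s) * p by rewrite mulNr opprK subrK.
by apply: (submod_subM HS sP (Pj1 _ vxs) Pp); exact: subringN.
Qed.

Definition values (P : K -> Prop) (c : nat) : {set 'I_c} :=
  [set j : 'I_c | `[< value_of P j >]].

Lemma values_sub (P Q : K -> Prop) c :
  subset_ P Q -> values P c \subset values Q c.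
Proof.
move=> PQ; apply/subsetP => j; rewrite !inE => /asboolP [x [Px ex]].
by apply/asboolP; exists x; split=> //; exact: PQ.
Qed.

Lemma values_determine (P Q : K -> Prop) c :
  submod S P -> submod S Q -> subset_ P Q -> (forall x, vge c x -> P x) ->
  (forall x, Q x -> Sbar S x) -> values Q c \subset values P c -> subset_ Q P.
Proof.
move=> sP sQ PQ Pc QSbar /subsetP QvP.
suff descent k : (k <= c)%N -> forall x, Q x -> vge (c - k) x -> P x.
  by move=> x Qx; apply: (descent c) => //; rewrite subnn; exact/vge0/QSbar.
elim: k => [_ x _|k IHk kc x Qx vx]; first by rewrite subn0; exact: Pc.
have [vx1|nvx1] := pselect (vge (c - k) x); first exact: IHk (ltnW kc) x Qx vx1.
have jc : (c - k.+1 < c)%N by lia.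
have Ej : (c - k.+1).+1 = (c - k)%N by lia.
have : Ordinal jc \in values Q c by rewrite inE; apply/asboolP; exists x; rewrite /vexact Ej.
move=> /QvP; rewrite inE => /asboolP [p [Pp ep]].
have [s [Ss vxs]] := residue_approx vx ep; rewrite Ej in vxs.
have Pxs : P (x - s * p) by apply: IHk (ltnW kc) _ _ vxs; apply: (submod_subM HS sQ Qx (PQ _ Pp) Ss).
have -> : x = (x - s * p) - (- s) * p by rewrite mulNr opprK subrK.
by apply: (submod_subM HS sP Pxs Pp); exact: subringN.
Qed.

Lemma chain_values N M ch d c : is_chain S N M ch d ->
  (forall x, vge c x -> N x) -> (forall x, M x -> Sbar S x) -> (d <= #|values M c|)%N.
Proof.
move=> chain Nc MSbar; have [ch0 [chd [chs chlt]]] := chain.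
suff grow i : (i <= d)%N -> (i <= #|values (ch i) c|)%N.
  apply: leq_trans (grow d (leqnn d)) _; apply: subset_leq_card.
  by apply: values_sub => x /chd.
elim: i => [//|i IHi id].
apply: leq_ltn_trans (IHi (ltnW id)) _; apply: proper_card; rewrite properE.
have [sub nsub] := chlt i id; rewrite values_sub //=; apply/negP => vsub.
apply: nsub; apply: values_determine vsub => //; [exact: chs (ltnW id)|exact: chs|..].
- by move=> x /Nc /ch0; apply: (chain_mono (i := 0) (k := i) chain); exact: ltnW.
- have := chain_mono (i := i.+1) (k := d - i.+1) chain; rewrite subnKC // => up.
  by move=> x /up - /(_ (leqnn d)) /chd; exact: MSbar.
Qed.

Definition Sext (j : nat) (x : K) := exists a b, S a /\ vge j b /\ x = a + b.

Lemma Sext_submod j : submod S (Sext j).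
Proof.
split; first by exists 0, 0; rewrite addr0; split; [exact: subring0 | split=> //; exact: vge_0].
split=> [x y [a [b [Sa [vb ->]]]] [a' [b' [Sa' [vb' ->]]]]|s x Ss [a [b [Sa [vb ->]]]]].
  by exists (a + a'), (b + b'); rewrite addrACA; split; [exact: subringD | split=> //; exact: vgeD].
exists (s * a), (s * b); rewrite mulrDr; split; first exact: subringM.
by split=> //; apply: vge_mull => //; exact: Sbar_S.
Qed.

Lemma Sext_mono j : subset_ (Sext j.+1) (Sext j).
Proof. by move=> x [a [b [Sa [vb ->]]]]; exists a, b; split=> //; split=> //; exact: vge_le vb. Qed.

Lemma Sext_gap j : ~ value_of S j -> ~ subset_ (Sext j) (Sext j.+1).
Proof.
move=> gap sub; have : Sext j (t ^+ j).
  by exists 0, (t ^+ j); rewrite add0r; split; [exact: subring0 | split=> //; exact: vge_tn].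
move=> /sub [a [b [Sa [vb Eab]]]]; apply: gap; exists a; split=> //.
by rewrite -[a](addrK b) -Eab; apply: vexact_addr; [exact: vexact_tn | exact: vgeN].
Qed.

Lemma gaps_bound c d : (forall x, vge c x -> S x) ->
  (forall ch m, is_chain S S (Sbar S) ch m -> (m <= d)%N) ->
  (#|[set j : 'I_c | ~~ `[< value_of S j >]]| <= d)%N.
Proof.
move=> Sc dmax.
have [||ch [m [chain msum]]] := @increasing_chain K S (fun i => Sext (c - i)) _ _ c.
- by move=> i; exact: Sext_submod.
- by move=> i; rewrite subnS; case: (c - i)%N => [|k] //=; exact: Sext_mono.
have chain' : is_chain S S (Sbar S) ch m.
  apply: chain_transport chain _ _ => x; rewrite ?subn0 ?subnn; split.
  - by move=> [a [b [Sa [vb ->]]]]; apply: subringD => //; exact: Sc.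
  - by move=> Sx; exists x, 0; rewrite addr0; split=> //; split=> //; exact: vge_0.
  - by move=> [a [b [Sa [/vge0 Sb ->]]]]; apply: Sbar_add => //; exact: Sbar_S.
  - by move=> Sx; exists 0, x; rewrite add0r; split; [exact: subring0 | split=> //; exact/vge0].
apply: leq_trans (dmax _ _ chain'); apply: leq_trans msum.
rewrite -sum1_card big_mkcond (reindex_inj rev_ord_inj) /=; apply: leq_sum => i _.
rewrite inE; case: asboolP => //= gap; rewrite lt0b; apply/asboolP.
by have := Sext_gap gap; rewrite subnSK.
Qed.

(* An n-primary ideal contains some t^k Sbar: it contains a nonzero b x0^k
   with b Sbar <= S, and b x0^k Sbar = t^(v(b x0^k)) Sbar. *)
Lemma conductor_exponent (I : K -> Prop) (l : seq K) x0 :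
  (forall x, exists a b, S a /\ S b /\ b != 0 /\ x = a / b) ->
  seteq (Sbar S) (spanS S l) -> n_primary S I -> nmax S x0 -> x0 != 0 ->
  exists k, forall x, vge k x -> I x.
Proof.
move=> frac Sbar_l [[IS [_ [_ IM]]] [_ [_ Ipow]]] nx0 x00.
have [b [Sb b0 Sbl]] := common_denominator HS l frac.
have bSbar y : Sbar S y -> S (b * y).
  move=> /Sbar_l [cs [scs [Scs ->]]]; rewrite mulr_sumr; apply: subring_sum => // i _.
  by rewrite mulrCA; apply: subringM => //; [apply: Scs; rewrite scs | exact: Sbl].
have [k Ix0k] := (Ipow x0 nx0.1).1 nx0.
pose z := b * x0 ^+ k.
have z0 : z != 0 by rewrite mulf_neq0 // expf_neq0.
have zSbar y : Sbar S y -> I (z * y) by move=> Sy; rewrite /z mulrAC; apply: IM => //; exact: bSbar.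
have [j ez] := value_exists (Sbar_S HS (subringM HS Sb (IS _ Ix0k))) z0.
have [_ Szi] := vexact_unit ez.
exists j => w vw; have -> : w = z * (w / t ^+ j * (t ^+ j / z)) by field; rewrite z0 ?tn_neq0.
by apply: zSbar; exact: Sbar_mul.
Qed.

Lemma least_conductor_exponent (P : K -> Prop) :
  (exists k, forall x, vge k x -> P x) -> ~ P 1 ->
  exists c, (forall x, vge c x -> P x) /\ ~ (forall x, vge c.-1 x -> P x).
Proof.
move=> [k Pk] nP1.
have [|c /asboolP Pc cmin] := ex_minnP (P := fun k => `[< forall x, vge k x -> P x >]).
  by exists k; exact/asboolP.
exists c; split=> // Pc1; case: c Pc cmin Pc1 => [_ _ P0|c _ cmin Pc1].
  by apply: nP1; apply: P0; apply/vge0; apply: Sbar_S => //; exact: subring1.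
by have := cmin c (asboolT Pc1); rewrite ltnn.
Qed.

Section MaximumSparse.
Variables (I : K -> Prop) (c d : nat) (chI : nat -> K -> Prop).
Hypotheses (HI : ideal S I) (Ic : forall x, vge c x -> I x)
  (Ic1 : ~ (forall x, vge c.-1 x -> I x))
  (chainI : is_chain S (conductor S I) I chI d)
  (delta : forall ch m, is_chain S S (Sbar S) ch m -> (m <= d)%N).

(* For c = 0 the hypotheses Ic and Ic1 would contradict each other. *)
Lemma exponent_gt0 : (0 < c)%N.
Proof. by rewrite lt0n; apply/eqP => c0; apply: Ic1; move: Ic; rewrite c0. Qed.

Lemma value_symmetry j : (j < c)%N -> value_of I j -> ~ value_of S (c - j.+1).
Proof.
move=> jc [x [Ix ex]] [s [Ss es]]; apply: Ic1.
have Ec : (c.-1).+1 = c by lia.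
apply: vge_closure HI.2 _ _ => [y|]; first by rewrite Ec; exact: Ic.
exists (s * x); split; first by case: HI => _ [_ [_ IM]]; exact: IM.
by have := vexactM es ex; have -> : (c - j.+1 + j = c.-1)%N by lia.
Qed.

(* Maximum sparseness turns the symmetry into a bijection: for j < c, either
   j is a value of I or c-1-j is a value of S. *)
Lemma value_duality j : (j < c)%N -> ~ value_of I j -> value_of S (c - j.+1).
Proof.
move=> jc nIj; pose gaps := [set i : 'I_c | ~~ `[< value_of S i >]].
have ISbar x : I x -> Sbar S x by move=> /HI.1; exact: Sbar_S.
have dI : (d <= #|values I c|)%N.
  by apply: chain_values chainI _ ISbar => x vx y Sy; apply: Ic; exact: vge_mulr.
have dS : (#|gaps| <= d)%N by apply: gaps_bound delta => x /Ic /HI.1.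
have sym : [set rev_ord i | i in values I c] \subset gaps.
  apply/subsetP => k /imsetP [i]; rewrite inE => /asboolP Ii ->.
  by rewrite inE; apply/asboolP; exact: value_symmetry (ltn_ord i) Ii.
have onto : [set rev_ord i | i in values I c] = gaps.
  apply/eqP; rewrite eqEcard sym card_imset; last exact: rev_ord_inj.
  exact: leq_trans dS dI.
apply: contrapT => nSj; have : rev_ord (Ordinal jc) \in gaps by rewrite inE; exact/asboolP.
rewrite -onto => /imsetP [i + /rev_ord_inj Ei]; rewrite -Ei inE => /asboolP.
exact: nIj.
Qed.

Lemma overideal_value J : ideal S J -> subset_ I J -> ~ subset_ J I -> value_of J c.-1.
Proof.
move=> [JS sJ] IJ nJI.
have : ~~ (values J c \subset values I c).
  apply/negP => vJI; apply: nJI; apply: values_determine vJI => //; first exact: HI.2.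
  by move=> x /JS; exact: Sbar_S.
move=> /subsetPn [j]; rewrite !inE => /asboolP [y [Jy ey]] /asboolP nIj.
have [s [Ss es]] := value_duality (ltn_ord j) nIj.
exists (s * y); split; first by case: sJ => _ [_ JM]; exact: JM.
by have := vexactM es ey; have -> : (c - j.+1 + j = c.-1)%N by have := ltn_ord j; lia.
Qed.

(* Hence every ideal strictly above I contains t^(c-1) Sbar, and so does the
   intersection of two of them: I is irreducible. *)
Lemma maximum_sparse_irreducible : irreducible_ideal S I.
Proof.
split=> // -[J1 [J2 [HJ1 [HJ2 [[IJ1 nJ1I] [[IJ2 nJ2I] IJ12]]]]]].
have big J : ideal S J -> subset_ I J -> ~ subset_ J I -> forall x, vge c.-1 x -> J x.
  move=> HJ IJ nJI; apply: vge_closure HJ.2 _ (overideal_value HJ IJ nJI) => x.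
  by rewrite prednK ?exponent_gt0 // => /Ic; exact: IJ.
by apply: Ic1 => x vx; apply/IJ12; split; [exact: big | exact: big].
Qed.

End MaximumSparse.

End Valuation.

Theorem proposition4p18 (K : fieldType) (S : K -> Prop) (t : K) :
  setting S t -> sparse_stretched S -> canonical_stretched S.
Proof.
move=> [HS [frac [_ [_ [[x0 [nx0 x00]] [_ [_ [_ [Sbar_t [t0 [tnu [fac [[l Sbar_l] [res _]]]]]]]]]]]]]].
move=> [I [[npI [d [[_ delta] [[chI chainI] _]]]] [In2 stretched]]].
exists I; split; last by split.
have Ik := conductor_exponent HS Sbar_t t0 tnu fac frac Sbar_l npI nx0 x00.
have [c [Ic Ic1]] := least_conductor_exponent HS Ik npI.2.1.
exact: (maximum_sparse_irreducible HS Sbar_t t0 tnu fac res npI.1 Ic Ic1 chainI delta).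
Qed.
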